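(* Let $m,d\geq 1$ and let $f:(0,\infty)^m\times\mathbb{R}^d\to\mathbb{R}$, $f=f(t,x)$, satisfy $f(t,0)=0$, have continuous first-order partial derivatives with respect to each $t^\alpha$ and continuous second-order partial derivatives with respect to the $x^a$. Suppose $f$ is a solution of the backward diffusion-like PDE system $$\frac{\partial f}{\partial t^\alpha}(t,x)+\frac12\,c_\alpha(t)\,\Delta_x f(t,x)=0,\qquad \alpha=1,\dots,m.$$ Then $f$ depends on the point $t=(t^1,\dots,t^m)$ only through the product $v=t^1\cdots t^m$, i.e. there is a function $\varphi$ with $f(t,x)=\varphi(t^1\cdots t^m,x)$; thus $f$ is a function of the volume $v$ of the box $\Omega_{0t}=\prod_\alpha[0,t^\alpha]$.
   Context: Here $c_\alpha(t)=\frac{\partial v}{\partial t^\alpha}=\prod_{\beta\neq\alpha}t^\beta$ where $v=t^1\cdots t^m$, and $\Delta_x f=\sum_{a=1}^d\frac{\partial^2 f}{(\partial x^a)^2}$. *)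

From HB Require Import structures.
From mathcomp Require Import all_boot all_order all_algebra.
From mathcomp Require Import all_classical all_reals all_analysis.
Set Implicit Arguments. Unset Strict Implicit. Unset Printing Implicit Defensive.
Import Order.TTheory GRing.Theory Num.Theory.
Import numFieldNormedType.Exports.
Local Open Scope ring_scope.

Definition unitv (R : realType) (n : nat) (i : 'I_n) : 'rV[R]_n := delta_mx ord0 i.

Definition posv (R : realType) (m : nat) (t : 'rV[R]_m) : Prop :=
  forall i : 'I_m, 0 < t ord0 i.

Definition vol (R : realType) (m : nat) (t : 'rV[R]_m) : R :=
  \prod_(i < m) t ord0 i.

(* c_alpha(t) = dv/dt^alpha = prod_{beta <> alpha} t^beta *)
Definition cfac (R : realType) (m : nat) (al : 'I_m) (t : 'rV[R]_m) : R :=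
  \prod_(be < m | be != al) t ord0 be.

Definition dt (R : realType) (m d : nat) (f : 'rV[R]_m -> 'rV[R]_d -> R)
  (al : 'I_m) (t : 'rV[R]_m) (x : 'rV[R]_d) : R :=
  'D_(unitv R al) (fun s => f s x) t.

Definition dx (R : realType) (m d : nat) (f : 'rV[R]_m -> 'rV[R]_d -> R)
  (a : 'I_d) (t : 'rV[R]_m) (x : 'rV[R]_d) : R :=
  'D_(unitv R a) (fun y => f t y) x.

Definition dxx (R : realType) (m d : nat) (f : 'rV[R]_m -> 'rV[R]_d -> R)
  (a b : 'I_d) (t : 'rV[R]_m) (x : 'rV[R]_d) : R :=
  'D_(unitv R b) (fun y => dx f a t y) x.

Definition lapx (R : realType) (m d : nat) (f : 'rV[R]_m -> 'rV[R]_d -> R)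
  (t : 'rV[R]_m) (x : 'rV[R]_d) : R :=
  \sum_(a < d) dxx f a a t x.

From HB Require Import structures.
From mathcomp Require Import all_boot all_order all_algebra.
From mathcomp Require Import all_classical all_reals all_analysis.
From mathcomp Require Import ring lra.
Import Order.TTheory GRing.Theory Num.Theory.
Import numFieldNormedType.Exports.
Local Open Scope ring_scope.

(* Multiplying the equation for alpha by t^alpha and using t^alpha c_alpha(t) = v(t) shows that
   t^alpha df/dt^alpha = -v(t) Delta_x f / 2 is the same for every alpha.  Hence, for alpha != beta,
   f is constant along the hyperbola where (t^alpha, t^beta) = (s, c / s): by the chain rule its
   s-derivative is (s d_alpha f - (c / s) d_beta f) / s = 0.  These volume-preserving moves
   connect every t to the point whose coordinates are all 1 except one, equal to v(t). *)

Section RealDerivatives.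
Context {R : realType}.
Local Open Scope classical_set_scope.
Implicit Types (f : R -> R) (a b l : R).

Lemma is_derive1_cvgP f a l :
  is_derive a 1 f l <-> h^-1 * (f (h + a) - f a) @[h --> 0^'] --> l.
Proof.
have quotE : (fun h : R => h^-1 *: ((f \o shift a) (h *: 1) - f a)) =
    (fun h => h^-1 * (f (h + a) - f a)).
  by apply/funext => h /=; rewrite [h *: 1]mulr1.
split=> [[df <-]|fl]; first by rewrite -quotE; exact: df.
have df : derivable f a 1 by rewrite /derivable quotE; exact: cvgP fl.
by apply: DeriveDef => //; rewrite /derive quotE; exact: cvg_lim fl.
Qed.

Lemma dist_le_between a b x :
  (a <= x <= b) || (b <= x <= a) -> `|x - a| <= `|b - a|.
Proof.
case/orP=> /andP[? ?].
  by rewrite !ger0_norm ?subr_ge0 //; lra.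
by rewrite !ler0_norm ?subr_le0 //; lra.
Qed.

Lemma MVT_dist f df a b :
  (forall x, `|x - a| <= `|b - a| -> is_derive x 1 f (df x)) ->
  exists2 c, `|c - a| <= `|b - a| & f b - f a = df c * (b - a).
Proof.
move=> fdf.
have MVT_between (lo hi : R) : lo <= hi ->
    (forall x : R, lo <= x <= hi -> is_derive x 1 f (df x)) ->
    exists2 c, lo <= c <= hi & f hi - f lo = df c * (hi - lo).
  move=> lohi dlohi.
  have [||c /[1!in_itv] /= c_lohi E] := @MVT_segment R f df lo hi lohi.
  - by move=> x /[1!in_itv] /= /andP[? ?]; apply: dlohi; rewrite !ltW.
  - apply: derivable_within_continuous => x /[1!in_itv] /= x_lohi.
    by have [] := dlohi x x_lohi.
  by exists c.
have [ab|ba] := leP a b.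
  have [x x_ab|c c_ab E] := MVT_between a b ab.
    by apply/fdf/dist_le_between; rewrite x_ab.
  by exists c => //; apply: dist_le_between; rewrite c_ab.
have [x x_ba|c c_ba E] := MVT_between b a (ltW ba).
  by apply/fdf/dist_le_between; rewrite x_ba orbT.
exists c; first by apply: dist_le_between; rewrite c_ba orbT.
by rewrite -opprB E -mulrN opprB.
Qed.

Lemma is_derive_0_is_cst_pos f :
  (forall s : R, 0 < s -> is_derive s 1 f 0) -> {in Num.pos &, forall a b, f a = f b}.
Proof.
move=> f'0 a b a0 b0; rewrite -(lnK a0) -(lnK b0).
apply: (@is_derive_0_is_cst R (f \o expR)) => s.
by rewrite -(mul0r (expR s)); apply: is_derive1_comp; exact: f'0 (expR_gt0 s).
Qed.

Lemma is_derive_cdivV (c s : R) : s != 0 ->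
  is_derive s 1 (fun y => c / y) (c * - s ^- 2).
Proof.
move=> s0; have did : derivable (@id R) s 1 by exact: ex_derive.
have dV : is_derive s 1 (fun y : R => y^-1) (- s ^- 2).
  apply: DeriveDef; first exact: derivableV.
  by rewrite deriveV // derive_val [_ *: 1]mulr1.
exact: is_deriveZ.
Qed.

Lemma MVT_point_cvg (G Dw : R -> R -> R) (W : R -> R) (s0 r : R) :
  0 < r ->
  (forall u w, `|u - s0| < r -> `|w - W s0| < r -> is_derive w 1 (G u) (Dw u w)) ->
  W (h + s0) @[h --> 0^'] --> W s0 ->
  exists2 eta : R -> R, eta @ 0^' --> W s0 & \forall h \near 0^',
    G (h + s0) (W (h + s0)) - G (h + s0) (W s0) = Dw (h + s0) (eta h) * (W (h + s0) - W s0).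
Proof.
move=> r0 dGw; set w0 := W s0 => Ws0h; have near_w0 := (cvgrPdist_lt _ _).1 Ws0h.
have /boolp.choice[eta eta_mvt] : forall h, exists c, `|h| < r ->
    `|W (h + s0) - w0| < r -> `|c - w0| <= `|W (h + s0) - w0| /\
    G (h + s0) (W (h + s0)) - G (h + s0) w0 = Dw (h + s0) c * (W (h + s0) - w0).
  move=> h; have [hr|] := pselect (`|h| < r); last by exists 0.
  have [Wr|] := pselect (`|W (h + s0) - w0| < r); last by exists 0.
  have [|c c_w0 E] := @MVT_dist (G (h + s0)) (Dw (h + s0)) w0 (W (h + s0)).
    by move=> w ?; apply: dGw; [rewrite addrK | exact: le_lt_trans Wr].
  by exists c.
have near_mvt : \forall h \near 0^', `|h| < r /\ `|W (h + s0) - w0| < r.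
  near=> h; split; first by near: h; exact: dnbhs0_lt.
  by rewrite distrC; near: h; exact: near_w0.
exists eta.
  apply/cvgrPdist_le => e e0; near=> h.
  have [hr Wr] : `|h| < r /\ `|W (h + s0) - w0| < r by near: h.
  have [+ _] := eta_mvt h hr Wr.
  rewrite distrC => /le_trans; apply; rewrite distrC ltW //.
  by near: h; exact: near_w0.
by apply: filterS near_mvt => h [hr Wr]; have [_ ->] := eta_mvt h hr Wr.
Unshelve. all: end_near.
Qed.

Lemma is_derive_comp2 (G Dw : R -> R -> R) (W : R -> R) (s0 Du W' r : R) :
  0 < r ->
  (forall u w, `|u - s0| < r -> `|w - W s0| < r -> is_derive w 1 (G u) (Dw u w)) ->
  {for (s0, W s0), continuous (fun p : R * R => Dw p.1 p.2)} ->
  is_derive s0 1 (G ^~ (W s0)) Du -> is_derive s0 1 W W' ->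
  is_derive s0 1 (fun s => G s (W s)) (Du + Dw s0 (W s0) * W').
Proof.
move=> r0 dGw cDw dGu dW; apply/is_derive1_cvgP.
have s0h : h + s0 @[h --> 0^'] --> s0.
  apply: cvg_within_filter.
  have : (fun h : R => h + s0) @ (0 : R) --> 0 + s0.
    by apply: cvgD; [exact: cvg_id | exact: cvg_cst].
  by rewrite add0r.
have Ws0h : W (h + s0) @[h --> 0^'] --> W s0.
  have /derivable1_diffP/differentiable_continuous cW : derivable W s0 1 by case: dW.
  exact: cvg_comp s0h cW.
have [eta eta_Ws0 eta_mvt] := MVT_point_cvg G Dw W s0 r r0 dGw Ws0h.
apply: cvg_trans; first apply: (near_eq_cvg (f := fun h =>
    h^-1 * (G (h + s0) (W s0) - G s0 (W s0)) +
    Dw (h + s0) (eta h) * (h^-1 * (W (h + s0) - W s0)))).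
  apply: filterS eta_mvt => h E.
  by rewrite -[in RHS](subrKA (G (h + s0) (W s0))) E; ring.
apply: cvgD; first exact/is_derive1_cvgP.
apply: cvgM; last exact/is_derive1_cvgP.
apply: (cvg_comp (fun h => (h + s0, eta h)) _ _ cDw).
exact: cvg_pair s0h eta_Ws0.
Qed.

End RealDerivatives.

Section Coordinates.
Context {R : realType} {m : nat}.
Implicit Types (t : 'rV[R]_m) (al be : 'I_m) (u w : R).

Definition set_coord2 t al be u w : 'rV[R]_m :=
  t + (u - t ord0 al) *: unitv R al + (w - t ord0 be) *: unitv R be.

Definition box_of_vol (b0 : 'I_m) (v : R) : 'rV[R]_m :=
  \row_j (if j == b0 then v else 1).

Lemma set_coord2E t al be u w j : al != be ->
  set_coord2 t al be u w ord0 j = if j == al then u else if j == be then w else t ord0 j.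
Proof.
move=> al_be; rewrite /set_coord2 /unitv !mxE /=.
have [->|j_al] := eqVneq j al; first by rewrite (negbTE al_be) /=; ring.
have [->|j_be] := eqVneq j be; first by rewrite /=; ring.
by rewrite !mulr0 !addr0.
Qed.

Lemma set_coord2_id t al be : set_coord2 t al be (t ord0 al) (t ord0 be) = t.
Proof. by rewrite /set_coord2 !subrr !scale0r !addr0. Qed.

Lemma posv_set_coord2 t al be u w : al != be -> posv t -> 0 < u -> 0 < w ->
  posv (set_coord2 t al be u w).
Proof. by move=> al_be tp u0 w0 j; rewrite set_coord2E //; case: ifP => //; case: ifP. Qed.

Lemma vol_set_coord2 t al be u w : al != be -> u * w = t ord0 al * t ord0 be ->
  vol (set_coord2 t al be u w) = vol t.
Proof.
move=> al_be uw; rewrite /vol (bigD1 al) // [RHS](bigD1 al) //=.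
rewrite (bigD1 be) 1?eq_sym // [in RHS](bigD1 be) 1?eq_sym //=.
rewrite !set_coord2E // eqxx (negbTE (_ : be != al)) 1?eq_sym // eqxx !mulrA uw.
congr (_ * _); apply: eq_bigr => i /andP[i_al i_be].
by rewrite set_coord2E // (negbTE i_al) (negbTE i_be).
Qed.

Lemma mul_cfac t al : t ord0 al * cfac al t = vol t.
Proof. by rewrite /vol (bigD1 al). Qed.

Lemma continuous_set_coord2 t al be :
  continuous (fun p : R * R => set_coord2 t al be p.1 p.2).
Proof.
move=> [u w]; apply: cvgD; first apply: cvgD; first exact: cvg_cst.
- by apply: cvgZl; apply: cvgB; [exact: cvg_fst | exact: cvg_cst].
- by apply: cvgZl; apply: cvgB; [exact: cvg_snd | exact: cvg_cst].
Qed.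

End Coordinates.

Lemma is_derive_along {R : realType} {V : normedModType R} (F : V -> R) (q : R -> V)
    (e : V) (u : R) :
  (forall h, q (h + u) = q u + h *: e) -> derivable F (q u) e ->
  is_derive u 1 (F \o q) ('D_e F (q u)).
Proof.
move=> q_line dF; apply/is_derive1_cvgP.
have -> : (fun h => h^-1 * ((F \o q) (h + u) - (F \o q) u)) =
    (fun h => h^-1 *: ((F \o shift (q u)) (h *: e) - F (q u))).
  by apply/funext => h /=; rewrite q_line [q u + _]addrC.
exact: dF.
Qed.

Lemma eq_box_of_vol {R : realType} {m : nat} (g : 'rV[R]_m -> R) (b0 : 'I_m) :
  (forall t al u, al != b0 -> posv t -> 0 < u ->
     g (set_coord2 t al b0 u (t ord0 al * t ord0 b0 / u)) = g t) ->
  forall t, posv t -> g t = g (box_of_vol b0 (vol t)).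
Proof.
move=> g_hyp t; move: {2}#|_| (erefl #|[set i | (i != b0) && (t ord0 i != 1)]|) => k.
elim: k t => [|k IHk] t card_t tp.
  have t1 i : i != b0 -> t ord0 i = 1.
    move=> i_b0; apply/eqP; apply: contraT => ti1.
    have : i \notin [set i | (i != b0) && (t ord0 i != 1)] by rewrite (cards0_eq card_t) inE.
    by rewrite inE i_b0 ti1.
  congr g; apply/rowP => j; rewrite mxE.
  have [->|/t1 //] := eqVneq j b0.
  by rewrite /vol (bigD1 b0) //= big1 ?mulr1.
have [al alA] : exists al, al \in [set i | (i != b0) && (t ord0 i != 1)].
  by apply/set0Pn; rewrite -card_gt0 card_t.
have /[!inE] /andP[al_b0 tal1] := alA.
set t' := set_coord2 t al b0 1 (t ord0 al * t ord0 b0 / 1).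
have t'p : posv t' by apply: posv_set_coord2 => //; rewrite divr1 mulr_gt0.
rewrite -(g_hyp t al 1) // -/t' IHk //.
- by rewrite vol_set_coord2 // divr1 mul1r.
rewrite -[k]/(k.+1.-1) -card_t [in RHS](cardsD1 al) alA /=.
apply: eq_card => i; rewrite !inE set_coord2E //.
by have [->|i_al] := eqVneq i al; [rewrite eqxx andbF | case: eqVneq].
Qed.

Section HyperbolaInvariance.
Context {R : realType} {m : nat}.
Variable (g : 'rV[R]_m -> R).
Hypothesis dg : forall al t, posv t -> derivable g t (unitv R al).
Hypothesis dg_cont : forall al t, posv t -> {for t, continuous ('D_(unitv R al) g)}.
Hypothesis dg_balance : forall al be t, posv t ->
  t ord0 al * 'D_(unitv R al) g t = t ord0 be * 'D_(unitv R be) g t.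

Lemma is_derive_hyperbola t al be (c s : R) : al != be -> posv t -> 0 < c -> 0 < s ->
  is_derive s 1 (fun s => g (set_coord2 t al be s (c / s))) 0.
Proof.
move=> al_be tp c0 s0.
have cs0 : 0 < c / s by rewrite divr_gt0.
have r0 : 0 < Num.min s (c / s) by rewrite lt_min s0 cs0.
have near_pos u w : `|u - s| < Num.min s (c / s) -> `|w - c / s| < Num.min s (c / s) ->
    posv (set_coord2 t al be u w).
  have : Num.min s (c / s) <= s /\ Num.min s (c / s) <= c / s by rewrite !ge_min !lexx orbT.
  move=> [? ?] /ltr_normlP[? _] /ltr_normlP[? _].
  by apply: posv_set_coord2 => //; lra.
have ps := posv_set_coord2 t al be s (c / s) al_be tp s0 cs0.
set p := set_coord2 t al be s (c / s).
suff -> : 0 = 'D_(unitv R al) g p + 'D_(unitv R be) g p * (c * - s ^- 2).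
  apply: (is_derive_comp2 (fun u w => g (set_coord2 t al be u w))
    (fun u w => 'D_(unitv R be) g (set_coord2 t al be u w)) (fun y => c / y) s _ _ _
    r0 _ _ _ (is_derive_cdivV c s (lt0r_neq0 s0))).
  - move=> u w us wc; apply: (is_derive_along _ (set_coord2 t al be u)).
      by move=> h; apply/rowP => j; rewrite /set_coord2 !mxE; ring.
    exact: dg be _ (near_pos u w us wc).
  - exact: continuous_comp (continuous_set_coord2 t al be (s, c / s)) (dg_cont be _ ps).
  - apply: (is_derive_along _ (set_coord2 t al be ^~ (c / s))); last exact: dg.
    by move=> h; apply/rowP => j; rewrite /set_coord2 !mxE; ring.
have := dg_balance al be _ ps.
rewrite !set_coord2E // eqxx (negbTE (_ : be != al)) 1?eq_sym // eqxx.
have s_neq0 := lt0r_neq0 s0.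
move=> bal; have -> : 'D_(unitv R be) g p * (c * - s ^- 2) = - (c / s * 'D_(unitv R be) g p) / s.
  by field.
by rewrite -bal; field.
Qed.

Lemma hyperbola_invariant t al be u : al != be -> posv t -> 0 < u ->
  g (set_coord2 t al be u (t ord0 al * t ord0 be / u)) = g t.
Proof.
move=> al_be tp u0; have c0 : 0 < t ord0 al * t ord0 be by rewrite mulr_gt0.
rewrite (@is_derive_0_is_cst_pos _ (fun s => g (set_coord2 t al be s (_ / s))) _ u (t ord0 al));
  rewrite ?posrE //; last by move=> s s0; exact: is_derive_hyperbola.
by rewrite mulrAC divff ?mul1r ?lt0r_neq0 // set_coord2_id.
Qed.

End HyperbolaInvariance.

Lemma dt_balance (R : realType) (m d : nat) (f : 'rV[R]_m -> 'rV[R]_d -> R) :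
  (forall al t x, posv t -> dt f al t x + 2^-1 * cfac al t * lapx f t x = 0) ->
  forall al be t x, posv t -> t ord0 al * dt f al t x = t ord0 be * dt f be t x.
Proof.
move=> pde al be t x tp.
have dtE a : t ord0 a * dt f a t x = - (2^-1 * vol t * lapx f t x).
  by move/eqP: (pde a t x tp); rewrite addr_eq0 => /eqP ->; rewrite -(mul_cfac t a); ring.
by rewrite !dtE.
Qed.

Theorem mainTheorem2 (R : realType) (m d : nat) (hm : (0 < m)%N) (hd : (0 < d)%N)
  (f : 'rV[R]_m -> 'rV[R]_d -> R)
  (Hf0 : forall t, posv t -> f t 0 = 0)
  (Hdt : forall (al : 'I_m) t x, posv t -> derivable (fun s => f s x) t (unitv R al))
  (Hdt_cont : forall (al : 'I_m) t x, posv t ->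
     {for (t, x), continuous (fun p : 'rV[R]_m * 'rV[R]_d => dt f al p.1 p.2)})
  (Hdx : forall (a : 'I_d) t x, posv t -> derivable (fun y => f t y) x (unitv R a))
  (Hdxx : forall (a b : 'I_d) t x, posv t ->
     derivable (fun y => dx f a t y) x (unitv R b))
  (Hdxx_cont : forall (a b : 'I_d) t x, posv t ->
     {for (t, x), continuous (fun p : 'rV[R]_m * 'rV[R]_d => dxx f a b p.1 p.2)})
  (Hpde : forall (al : 'I_m) t x, posv t ->
     dt f al t x + 2^-1 * cfac al t * lapx f t x = 0) :
  exists phi : R -> 'rV[R]_d -> R,
    forall t x, posv t -> f t x = phi (vol t) x.
Proof.
pose b0 : 'I_m := Ordinal hm.
exists (fun v x => f (box_of_vol b0 v) x) => t x tp.
apply: (eq_box_of_vol (fun s => f s x) b0) => // {}t al u al_b0 {}tp u0.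
apply: (hyperbola_invariant (fun s => f s x)) => //.
- by move=> a s sp; exact: Hdt.
- move=> a s sp.
  exact: continuous_comp (cvg_pair cvg_id (cvg_cst x)) (Hdt_cont a s x sp).
- by move=> a b s sp; exact: dt_balance.
Qed.
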